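(* Let $C_1$ be a binary singly-even self-dual $(n,k,d)$-code and $C_2$ a binary doubly-even self-dual code of length $n$. Suppose $C_1$ and $C_2$ are neighbors, and let $C_{k-1}=C_1\cap C_2$ (their common maximal doubly-even subcode). Then every codeword $c\in C_{k-1}^{\perp}$ of weight $w(c)\equiv 2\pmod 4$ satisfies $d\le w(c)\le n-d$.
   Context: Codes are binary linear codes in $\mathbb{F}_2^n$ with the standard inner product $\sum_i x_iy_i\in\mathbb{F}_2$; $D^\perp$ denotes the dual code of $D$, and $C$ is self-dual if $C=C^\perp$ (then $k=n/2$). An $(n,k,d)$-code has length $n$, dimension $k$, minimum distance $d$. The weight $w(x)$ is the number of nonzero coordinates. A self-dual code is singly-even if it contains a codeword of weight $\equiv 2\pmod 4$, and doubly-even if all codewords have weight divisible by $4$. Two self-dual codes of length $n$ are neighbors if their intersection has dimension $n/2-1$. *)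

From HB Require Import structures.
From mathcomp Require Import all_boot all_order all_algebra.
Set Implicit Arguments. Unset Strict Implicit. Unset Printing Implicit Defensive.
Import GRing.Theory.
Local Open Scope ring_scope.

Notation word n := 'rV['F_2]_n.
Notation code n := {vspace 'rV['F_2]_n}.

Definition dotw n (x y : word n) : 'F_2 := \sum_(i < n) x 0 i * y 0 i.

Definition wt n (x : word n) : nat := #|[set i : 'I_n | x 0 i != 0]|.

Definition in_dual n (D : code n) (x : word n) : Prop :=
  forall y, y \in D -> dotw x y = 0.

Definition self_dual n (C : code n) : Prop :=
  forall x : word n, x \in C <-> in_dual C x.

Definition singly_even n (C : code n) : Prop :=
  exists2 x, x \in C & (wt x %% 4 = 2)%N.

Definition doubly_even n (C : code n) : Prop :=
  forall x, x \in C -> (wt x %% 4 = 0)%N.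

Definition min_dist n (C : code n) (d : nat) : Prop :=
  (exists x, exists y, [/\ x \in C, y \in C, x != y & wt (x - y) = d]) /\
  (forall x y, x \in C -> y \in C -> x != y -> (d <= wt (x - y))%N).

Definition nkd_code n (C : code n) (k d : nat) : Prop :=
  (\dim C = k)%N /\ min_dist C d.

Definition neighbors n (C1 C2 : code n) : Prop :=
  (\dim (C1 :&: C2) = n./2 - 1)%N.

(* The all-ones word lies in every self-dual code, and for any two self-dual
   codes the dual of C = C1 :&: C2 is C1 + C2 by a dimension count.  As C is
   doubly-even of codimension one in C1, C1 = C + <[s]> for any s in C1 of
   weight 2 mod 4, so C^perp = C2 + <[s]>.  Weights add modulo 4 up to twice
   the inner product, so a word b + s (b in C2) has weight 2 mod 4 only if
   b is orthogonal to s; being in C2 it is also orthogonal to C, hence lies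
   in C1^perp = C1.  So c lies in C1 and differs from 0 and from the all-ones
   word (whose weight n is 0 mod 4 because it lies in C2); the minimum
   distance then bounds the weights of c and of its complement. *)

From mathcomp Require Import all_boot all_order all_algebra.
From mathcomp Require Import zify.
Set Implicit Arguments. Unset Strict Implicit. Unset Printing Implicit Defensive.
Import GRing.Theory.
Local Open Scope ring_scope.

Lemma F2_cases (a : 'F_2) : a = 0 \/ a = 1.
Proof. by case: a => [[|[|//]]] ?; [left | right]; apply: val_inj. Qed.

Lemma F2_natE k : (k%:R : 'F_2) = (odd k)%:R.
Proof. by rewrite -(Fp_nat_mod (p := 2)) // modn2. Qed.

Section Weights.
Variable n : nat.
Implicit Types x y : word n.

Definition overlap x y : nat := #|[set i : 'I_n | (x 0 i != 0) && (y 0 i != 0)]|.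

Definition all_ones : word n := const_mx 1.

Lemma card_set_nat_sum (P : pred 'I_n) : #|[set i | P i]| = (\sum_(i < n) P i)%N.
Proof.
by rewrite -sum1_card big_mkcond; apply: eq_bigr => i _; rewrite inE; case: (P i).
Qed.

Lemma wtD_overlap x y : (wt (x + y) + (overlap x y).*2 = wt x + wt y)%N.
Proof.
rewrite -mul2n /wt /overlap !card_set_nat_sum big_distrr -!big_split /=.
apply: eq_bigr => i _; rewrite mxE.
by case: (F2_cases (x 0 i)) => ->; case: (F2_cases (y 0 i)) => ->.
Qed.

Lemma dotw_overlap x y : dotw x y = (overlap x y)%:R.
Proof.
rewrite /dotw /overlap card_set_nat_sum natr_sum; apply: eq_bigr => i _.
by case: (F2_cases (x 0 i)) => ->; case: (F2_cases (y 0 i)) => ->;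
  rewrite ?mulr0 ?mul0r ?mulr1.
Qed.

Lemma dotw_neq0 x y : (dotw x y != 0) = odd (overlap x y).
Proof. by rewrite dotw_overlap F2_natE; case: odd. Qed.

Lemma wtD_mod4 x y : (wt (x + y) = wt x + wt y + 2 * (dotw x y != 0%R) %[mod 4])%N.
Proof.
rewrite dotw_neq0 -wtD_overlap.
rewrite -[in (overlap x y).*2](odd_double_half (overlap x y)).
case: odd => /=; rewrite -!muln2; lia.
Qed.

Lemma overlap_diag x : overlap x x = wt x.
Proof. by apply: eq_card => i; rewrite !inE andbb. Qed.

Lemma overlap_all_onesl y : overlap all_ones y = wt y.
Proof. by apply: eq_card => i; rewrite !inE mxE oner_eq0. Qed.

Lemma wt0 : wt (0 : word n) = 0%N.
Proof. by apply/eqP; rewrite cards_eq0; apply/eqP/setP => i; rewrite !inE mxE eqxx. Qed.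

Lemma wt_all_ones : wt all_ones = n.
Proof. by rewrite /wt -[RHS]card_ord; apply: eq_card => i; rewrite !inE mxE oner_eq0. Qed.

End Weights.

Section InnerProduct.
Variable n : nat.
Implicit Types (x y z : word n) (D : code n).

Lemma dotw0r x : dotw x 0 = 0.
Proof. by rewrite /dotw big1 // => i _; rewrite mxE mulr0. Qed.

Lemma dotwDr x y z : dotw x (y + z) = dotw x y + dotw x z.
Proof. by rewrite /dotw -big_split; apply: eq_bigr => i _; rewrite mxE mulrDr. Qed.

Lemma dotwZr x k y : dotw x (k *: y) = k * dotw x y.
Proof. by rewrite /dotw mulr_sumr; apply: eq_bigr => i _; rewrite mxE mulrCA. Qed.

Lemma dotw_sumr m x (k : 'I_m -> 'F_2) (X : 'I_m -> word n) :
  dotw x (\sum_i k i *: X i) = \sum_i k i * dotw x (X i).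
Proof.
by elim/big_rec2: _ => [|i a b _ <-]; rewrite ?dotw0r // dotwDr dotwZr.
Qed.

Definition dual_mx D : 'M['F_2]_(n, \dim D) := \matrix_(j, i) (vbasis D)`_i 0 j.

Definition dual_map D : 'Hom(word n, 'rV['F_2]_(\dim D)) := linfun (mulmxr (dual_mx D)).

Definition dual_code D : code n := lker (dual_map D).

Lemma dual_mxE D x i : (x *m dual_mx D) 0 i = dotw x (vbasis D)`_i.
Proof. by rewrite mxE; apply: eq_bigr => j _; rewrite mxE. Qed.

Lemma mem_dual_code D x : x \in dual_code D <-> in_dual D x.
Proof.
rewrite memv_ker lfunE /=; split=> [/eqP x_ker y yD | x_dual].
  rewrite (coord_vbasis yD) dotw_sumr big1 // => i _.
  by rewrite -dual_mxE x_ker mxE mulr0.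
by apply/eqP/rowP => i; rewrite dual_mxE mxE x_dual // vbasis_mem ?mem_nth ?size_tuple.
Qed.

Lemma row_free_trmx_dual_mx D : row_free (dual_mx D)^T.
Proof.
have /freeP free_basis := basis_free (vbasisP D).
apply: inj_row_free => u; rewrite mulmx_sum_row => u_ker; apply/rowP => i.
rewrite [RHS]mxE; apply: (free_basis (fun j => u 0 j)); rewrite -[RHS]u_ker.
by apply: eq_bigr => j _; congr (_ *: _); apply/rowP => k; rewrite !mxE.
Qed.

Lemma limg_dual_map D : limg (dual_map D) = fullv.
Proof.
apply/eqP; rewrite eqEsubv subvf; apply/subvP => t _.
have /row_fullP[B BK] : row_full (dual_mx D).
  by rewrite /row_full -mxrank_tr; exact: row_free_trmx_dual_mx.
rewrite -[t]mulmx1 -BK mulmxA -[_ *m dual_mx D](lfunE (mulmxr (dual_mx D))).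
by rewrite memv_img ?memvf.
Qed.

Lemma dim_dual_code D : \dim (dual_code D) = (n - \dim D)%N.
Proof.
have := limg_ker_dim (dual_map D) fullv.
rewrite capfv limg_dual_map !dimvf /dim /= !mul1n => E.
by rewrite -[X in (X - _)%N]E addnK.
Qed.

End InnerProduct.

Lemma addv_line_codim1 (K : fieldType) (vT : vectType K) (U V : {vspace vT}) a :
  (U <= V)%VS -> (\dim V <= (\dim U).+1)%N -> a \in V -> a \notin U ->
  (U + <[a]>)%VS = V.
Proof.
move=> sUV dimV aV aU; apply/eqP; rewrite eqEdim subv_add sUV -memvE aV /=.
apply: leq_trans dimV _; rewrite (ltn_leqif (dimv_leqif_eq (addvSl U <[a]>))).
by apply: contra aU => /eqP->; rewrite memvE addvSr.
Qed.

Section Duality.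
Variable n : nat.
Implicit Types (x : word n) (U V : code n).

Lemma in_dual_addv U V x : in_dual U x -> in_dual V x -> in_dual (U + V) x.
Proof.
by move=> xU xV _ /memv_addP[u uU [v vV ->]]; rewrite dotwDr xU // xV // addr0.
Qed.

Lemma in_dual_line x a : dotw x a = 0 -> in_dual <[a]> x.
Proof. by move=> xa _ /vlineP[k ->]; rewrite dotwZr xa mulr0. Qed.

Lemma dual_codeS U V : (U <= V)%VS -> (dual_code V <= dual_code U)%VS.
Proof.
move=> sUV; apply/subvP => x /mem_dual_code xV; apply/mem_dual_code => y yU.
exact/xV/(subvP sUV).
Qed.

Lemma self_dual_dual_code U : self_dual U -> dual_code U = U.
Proof.
move=> sdU; apply/vspaceP => x.
by apply/idP/idP => [/mem_dual_code/(sdU x) | /(sdU x)/mem_dual_code].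
Qed.

Lemma dim_self_dual U : self_dual U -> n = (\dim U).*2.
Proof.
move=> sdU; have := dim_dual_code U; rewrite self_dual_dual_code //.
have := dimvS (subvf U); rewrite dimvf /dim /= mul1n; lia.
Qed.

Lemma all_ones_self_dual U : self_dual U -> all_ones n \in U.
Proof.
move=> sdU; apply/sdU => y yU.
rewrite dotw_overlap overlap_all_onesl -overlap_diag -dotw_overlap.
exact: (proj1 (sdU y) yU).
Qed.

Lemma dual_code_capv U V :
  self_dual U -> self_dual V -> dual_code (U :&: V) = (U + V)%VS.
Proof.
move=> sdU sdV; apply/esym/eqP; rewrite eqEdim subv_add.
have := dual_codeS (capvSl U V); have := dual_codeS (capvSr U V).
rewrite (self_dual_dual_code sdU) (self_dual_dual_code sdV) => -> -> /=.
have := dimv_sum_cap U V; have := dim_self_dual sdU; have := dim_self_dual sdV.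
rewrite dim_dual_code; lia.
Qed.

End Duality.

Lemma wt_all_ones_sub n (x : word n) : (wt x + wt (all_ones n - x) = n)%N.
Proof.
rewrite /wt -[RHS]card_ord -(cardsC [set i | x 0 i != 0]); congr (_ + _).
apply: eq_card => i; rewrite !inE !mxE.
by case: (F2_cases (x 0 i)) => ->.
Qed.

Lemma min_dist_wt n (C : code n) d x :
  min_dist C d -> x \in C -> x != 0 -> (d <= wt x)%N.
Proof. by move=> [_ dmin] xC x0; rewrite -[x]subr0 dmin ?mem0v. Qed.

Section Neighbors.
Variables (n : nat) (C1 C2 : code n) (s : word n).
Hypotheses (sd1 : self_dual C1) (sd2 : self_dual C2) (de2 : doubly_even C2).
Hypotheses (nb : neighbors C1 C2) (sC1 : s \in C1) (wt_s : (wt s %% 4 = 2)%N).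

Lemma capv_addv_line : ((C1 :&: C2) + <[s]>)%VS = C1.
Proof.
apply: addv_line_codim1; rewrite ?capvSl //.
  by move: nb (congr1 half (dim_self_dual sd1)); rewrite /neighbors doubleK; lia.
by apply/memv_capP => -[_ /de2]; rewrite wt_s.
Qed.

Lemma dual_capv_neighbors : dual_code (C1 :&: C2) = (C2 + <[s]>)%VS.
Proof.
rewrite dual_code_capv // -{1}capv_addv_line -addvA (addvC <[s]>%VS) addvA.
by rewrite (addv_idPr (capvSr C1 C2)).
Qed.

Lemma dual_capv_wt2_mem c :
  c \in dual_code (C1 :&: C2) -> (wt c %% 4 = 2)%N -> c \in C1.
Proof.
rewrite dual_capv_neighbors => /memv_addP[b bC2 [_ /vlineP[k ->]] ->].
have [-> | ->] := F2_cases k; rewrite ?scale0r ?addr0 ?scale1r => wt_c.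
  by move: wt_c; rewrite de2.
have bs : dotw b s = 0.
  apply/eqP/negbNE/negP => bs; move: wt_c (de2 bC2) wt_s.
  by rewrite wtD_mod4 bs /=; lia.
have bC1 : b \in C1.
  apply/sd1; rewrite -capv_addv_line; apply: in_dual_addv; last exact: in_dual_line.
  by move=> y /memv_capP[_ yC2]; apply: (proj1 (sd2 b) bC2).
by rewrite memvD.
Qed.

End Neighbors.

Theorem mainTheorem5 (n k d : nat) (C1 C2 : code n) :
  self_dual C1 -> singly_even C1 -> nkd_code C1 k d ->
  self_dual C2 -> doubly_even C2 ->
  neighbors C1 C2 ->
  forall c : word n, in_dual (C1 :&: C2)%VS c -> (wt c %% 4 = 2)%N ->
    (d <= wt c)%N /\ (wt c <= n - d)%N.
Proof.
move=> sd1 [s sC1 wt_s] [_ dC1] sd2 de2 nb c /mem_dual_code c_dual wt_c.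
have cC1 := dual_capv_wt2_mem sd1 sd2 de2 nb sC1 wt_s c_dual wt_c.
have n4 : (n %% 4 = 0)%N by rewrite -(wt_all_ones n) de2 ?all_ones_self_dual.
split.
  by apply: min_dist_wt dC1 cC1 _; apply/eqP => c0; move: wt_c; rewrite c0 wt0.
have c1 : all_ones n != c by apply/eqP => c1; move: wt_c; rewrite -c1 wt_all_ones n4.
have : (d <= wt (all_ones n - c))%N := proj2 dC1 _ _ (all_ones_self_dual sd1) cC1 c1.
have := wt_all_ones_sub c; lia.
Qed.
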